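(* If $G$ is a CAM group, then $G$ is residually finite.
   Context: Let $G$ be a countable discrete group. A topological $G$-system $(X,T)$ consists of a compact metric space $X$ and an action $T\colon G\to\mathrm{Homeo}(X)$, $g\mapsto T_g$. The system is topologically transitive if for all nonempty open $U,V\subseteq X$ there is $g\in G$ with $T_gU\cap V\neq\emptyset$; the action is faithful if $T_g=\mathrm{id}_X$ only when $g$ is the identity. A point is periodic if its $G$-orbit is finite. The system is chaotic almost minimal (CAM) if: (1) it is topologically transitive and the action is faithful; (2) the periodic points are dense in $X$; (3) every proper closed $T$-invariant subset of $X$ is finite. The group $G$ is a CAM group if there is an infinite compact metric space $X$ and a CAM $G$-system on $X$. A group is residually finite if for every non-identity $g$ there is a homomorphism to a finite group not sending $g$ to the identity. *)

From HB Require Import structures.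
From mathcomp Require Import all_boot all_order all_algebra all_fingroup.
From mathcomp Require Import all_classical all_reals all_analysis.

Set Implicit Arguments.
Unset Strict Implicit.
Unset Printing Implicit Defensive.

Import Order.TTheory GRing.Theory Num.Theory.
Local Open Scope classical_set_scope.

(* A (left) action of a (possibly infinite) group G on a topological space X
   by homeomorphisms: T 1 = id, T (g * h) = T g \o T h, each T g continuous.
   (Each T g is then a homeomorphism with inverse T g^-1.) *)
Definition is_action_by_homeos (G : groupType) (X : topologicalType)
  (T : G -> X -> X) : Prop :=
  [/\ forall x, T 1%g x = x,
      forall g h x, T (g * h)%g x = T g (T h x)
    & forall g, continuous (T g)].

Definition topologically_transitive (G : groupType) (X : topologicalType)
  (T : G -> X -> X) : Prop :=
  forall U V : set X, open U -> open V -> U !=set0 -> V !=set0 ->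
    exists g : G, (T g @` U) `&` V !=set0.

Definition faithful_action (G : groupType) (X : Type) (T : G -> X -> X) : Prop :=
  forall g : G, (forall x, T g x = x) -> g = 1%g.

Definition orbit_of (G : groupType) (X : Type) (T : G -> X -> X) (x : X) : set X :=
  [set T g x | g in [set: G]].

Definition periodic_point (G : groupType) (X : Type) (T : G -> X -> X) (x : X) : Prop :=
  finite_set (orbit_of T x).

Definition T_invariant (G : groupType) (X : Type) (T : G -> X -> X) (A : set X) : Prop :=
  forall g x, A x -> A (T g x).

Definition CAM (G : groupType) (X : topologicalType) (T : G -> X -> X) : Prop :=
  [/\ is_action_by_homeos T,
      topologically_transitive T /\ faithful_action T,
      dense [set x | periodic_point T x]
    & forall A : set X, closed A -> T_invariant T A -> A != [set: X] ->
        finite_set A].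

Definition CAM_group (G : groupType) : Prop :=
  exists (R : realType) (X : metricType R) (T : G -> X -> X),
    compact [set: X] /\ infinite_set [set: X] /\ CAM T.

Definition group_hom (G H : groupType) (f : G -> H) : Prop :=
  forall x y, f (x * y)%g = (f x * f y)%g.

Definition residually_finite (G : groupType) : Prop :=
  forall g : G, g != 1%g ->
    exists (F : finGroupType) (f : G -> F), group_hom f /\ f g != 1%g.

From mathcomp Require Import all_boot all_order all_algebra all_fingroup.
From mathcomp Require Import all_classical all_reals all_analysis.
From mathcomp Require Import finmap.

Set Implicit Arguments.
Unset Strict Implicit.
Unset Printing Implicit Defensive.

(* For g <> 1, faithfulness gives a point moved by g^-1; since moved points
   form an open set and periodic points are dense, some periodic point p is
   moved by g^-1.  G acts on the finite orbit of p, which yields a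
   homomorphism into a finite permutation group in which g acts
   nontrivially. *)

Local Open Scope classical_set_scope.

Lemma dense_moved_point (X : topologicalType) (D : set X) (f : X -> X) (x0 : X) :
  hausdorff_space X -> continuous f -> dense D -> f x0 != x0 ->
  exists2 p, D p & f p != p.
Proof.
rewrite open_hausdorff => hX fC dD /hX [[A B] /= [Ax0 Bx0] [oA oB /eqP AB0]].
have oBA : open (B `&` f @^-1` A) by apply: openI => //; exact: open_comp.
have [p [[Bp Ap] Dp]] : (B `&` f @^-1` A) `&` D !=set0.
  by apply: dD oBA; exists x0; split; exact: set_mem.
exists p => //; apply/eqP => fp.
have : (A `&` B) p by split => //; rewrite -fp.
by rewrite AB0.
Qed.

Lemma faithful_moved_point (G : groupType) (X : eqType) (T : G -> X -> X) (g : G) :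
  faithful_action T -> g != 1%g -> exists x, T g x != x.
Proof.
move=> Tf; apply: contra_neqP => nomove; apply: Tf => x.
by apply/eqP; apply: contrapT => Tgx; apply: nomove; exists x; exact/negP.
Qed.

Section PermRepresentation.

Variables (G : groupType) (X : choiceType) (T : G -> X -> X).
Hypothesis act1 : forall x, T 1%g x = x.
Hypothesis actM : forall g h x, T (g * h)%g x = T g (T h x).

Lemma orbit_of_invariant (x : X) : T_invariant T (orbit_of T x).
Proof. by move=> g _ [h _ <-]; exists (g * h)%g => //; rewrite actM. Qed.

Variables (s : {fset X}) (s_invariant : forall g x, x \in s -> T g x \in s).

Definition fset_act (g : G) (y : s) : s := insubd y (T g (val y)).

Lemma val_fset_act g y : val (fset_act g y) = T g (val y).
Proof. by rewrite insubdK //; apply: s_invariant; exact: valP. Qed.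

Lemma fset_actK g : cancel (fset_act g) (fset_act g^-1).
Proof. by move=> y; apply: val_inj; rewrite !val_fset_act -actM mulVg act1. Qed.

(* {perm s} composes left to right, so g must act through g^-1. *)
Definition perm_rep (g : G) : {perm s} := perm (can_inj (fset_actK g^-1)).

Lemma perm_repE g y : perm_rep g y = fset_act g^-1 y.
Proof. exact: permE. Qed.

Lemma perm_rep_hom : group_hom perm_rep.
Proof.
move=> g h; apply/permP => y; rewrite permM !perm_repE; apply: val_inj.
by rewrite !val_fset_act invMg actM.
Qed.

End PermRepresentation.

Theorem proposition3p1 (G : groupType) :
  countable [set: G] -> CAM_group G -> residually_finite G.
Proof.
move=> _ [R [X [T [_ [_ [Tact [_ Tfaithful] periodic_dense _]]]]]] g gN1.
have [act1 actM Tcont] := Tact.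
have [x0 moved_x0] : exists x0, T g^-1%g x0 != x0.
  by apply: faithful_moved_point; rewrite // invg_eq1.
have [p /finite_fsetP [s orbit_s] moved_p] :=
  dense_moved_point (@metric_hausdorff _ X) (Tcont _) periodic_dense moved_x0.
have s_invariant g' y : y \in s -> T g' y \in s.
  by have := orbit_of_invariant actM (x:=p); rewrite orbit_s; apply.
have ps : p \in s by change ([set` s] p); rewrite -orbit_s; exists 1%g.
exists {perm s}, (perm_rep act1 actM s_invariant); split.
  exact: perm_rep_hom.
apply: contra_neq moved_p => rep_g1.
have := congr1 val (congr1 (fun f : {perm s} => f (FSetSub ps)) rep_g1).
by rewrite perm1 perm_repE (val_fset_act s_invariant).
Qed.
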